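(* Let $\widetilde\nabla$ be a canonical snm-connection on $\mathbb R^3$ determined by the unit constant vector field $\mathsf C$. Then every cylindrical surface whose rulings are parallel to $\mathsf C$ has constant sectional curvature $K\equiv\tfrac12$ with respect to $\widetilde\nabla$.
   Context: Let $\langle\cdot,\cdot\rangle$ be the Euclidean metric on $\mathbb R^3$ and $\widetilde\nabla^0$ its Levi-Civita connection (the ordinary directional derivative). Given a smooth vector field $\mathsf C$ on $\mathbb R^3$, the semi-symmetric non-metric connection (snm-connection) determined by $\mathsf C$ is $\widetilde\nabla_XY=\widetilde\nabla^0_XY+\langle \mathsf C,Y\rangle X$. It is called canonical if $\mathsf C$ is a constant vector field with $|\mathsf C|=1$. Its curvature tensor is $\widetilde R(X,Y)Z=\widetilde\nabla_X\widetilde\nabla_YZ-\widetilde\nabla_Y\widetilde\nabla_XZ-\widetilde\nabla_{[X,Y]}Z$. For a surface $M$ immersed in $\mathbb R^3$, the induced connection is $\nabla_XY=(\widetilde\nabla_XY)^{\top}$ (tangential component), with curvature tensor $R$ defined by the same formula, and the sectional curvature of $M$ with respect to $\widetilde\nabla$ at $p$ is $K(p)=\frac12\big(\langle R(e_1,e_2)e_2,e_1\rangle+\langle R(e_2,e_1)e_1,e_2\rangle\big)$ for an orthonormal basis $\{e_1,e_2\}$ of $T_pM$. A cylindrical surface with rulings parallel to a unit vector $\vec w$ is a surface $\psi(s,t)=\gamma(s)+t\vec w$, $s\in I$, $t\in\mathbb R$, where $\gamma$ is a regular curve in a plane orthogonal to $\vec w$. *)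

From Stdlib Require Import Reals List.
From Coquelicot Require Import Coquelicot.
Open Scope R_scope.

Record V3 := mkV3 { vx : R; vy : R; vz : R }.

Definition vadd (u v : V3) : V3 := mkV3 (vx u + vx v) (vy u + vy v) (vz u + vz v).
Definition vscal (a : R) (v : V3) : V3 := mkV3 (a * vx v) (a * vy v) (a * vz v).
Definition vopp (v : V3) : V3 := vscal (-1) v.
Definition vdot (u v : V3) : R := vx u * vx v + vy u * vy v + vz u * vz v.
Definition vzero : V3 := mkV3 0 0 0.

Definition vderiv (g : R -> V3) (s : R) : V3 :=
  mkV3 (Derive (fun a => vx (g a)) s) (Derive (fun a => vy (g a)) s)
       (Derive (fun a => vz (g a)) s).

Definition ds (f : R -> R -> R) (s t : R) : R := Derive (fun a => f a t) s.
Definition dt (f : R -> R -> R) (s t : R) : R := Derive (fun b => f s b) t.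

Definition dsV (V : R -> R -> V3) (s t : R) : V3 :=
  mkV3 (ds (fun a b => vx (V a b)) s t) (ds (fun a b => vy (V a b)) s t)
       (ds (fun a b => vz (V a b)) s t).
Definition dtV (V : R -> R -> V3) (s t : R) : V3 :=
  mkV3 (dt (fun a b => vx (V a b)) s t) (dt (fun a b => vy (V a b)) s t)
       (dt (fun a b => vz (V a b)) s t).

Fixpoint dpart (l : list bool) (f : R -> R -> R) : R -> R -> R :=
  match l with
  | nil => f
  | b :: l' => if b then ds (dpart l' f) else dt (dpart l' f)
  end.

Definition smooth2 (U : R -> R -> Prop) (f : R -> R -> R) : Prop :=
  forall (l : list bool) (s t : R), U s t ->
    ex_derive (fun a => dpart l f a t) s /\
    ex_derive (fun b => dpart l f s b) t /\
    continuous (fun p : R * R => dpart l f (fst p) (snd p)) (s, t).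

Definition cyl (g : R -> V3) (w : V3) (s t : R) : V3 := vadd (g s) (vscal t w).

(** Tangent vector fields on the immersed surface psi, described by their
    coefficients in the coordinate frame (psi_s, psi_t):
    X = x1 psi_s + x2 psi_t. *)
Record TF := mkTF { tc1 : R -> R -> R; tc2 : R -> R -> R }.

Definition tfsub (x y : TF) : TF :=
  mkTF (fun s t => tc1 x s t - tc1 y s t) (fun s t => tc2 x s t - tc2 y s t).

Section Surface.
Variable psi : R -> R -> V3.

Definition psi_s := dsV psi.
Definition psi_t := dtV psi.

Definition tanf (x : TF) (s t : R) : V3 :=
  vadd (vscal (tc1 x s t) (psi_s s t)) (vscal (tc2 x s t) (psi_t s t)).

Definition Dflat (x : TF) (V : R -> R -> V3) (s t : R) : V3 :=
  vadd (vscal (tc1 x s t) (dsV V s t)) (vscal (tc2 x s t) (dtV V s t)).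

Definition snm (C : V3) (x : TF) (V : R -> R -> V3) (s t : R) : V3 :=
  vadd (Dflat x V s t) (vscal (vdot C (V s t)) (tanf x s t)).

(** Coefficients (w.r.t. psi_s, psi_t) of the tangential component of an
    ambient vector field v along psi (via the first fundamental form). *)
Definition tan_coef (v : R -> R -> V3) : TF :=
  let E s t := vdot (psi_s s t) (psi_s s t) in
  let F s t := vdot (psi_s s t) (psi_t s t) in
  let G s t := vdot (psi_t s t) (psi_t s t) in
  let a s t := vdot (v s t) (psi_s s t) in
  let b s t := vdot (v s t) (psi_t s t) in
  mkTF (fun s t => (G s t * a s t - F s t * b s t) / (E s t * G s t - F s t ^ 2))
       (fun s t => (E s t * b s t - F s t * a s t) / (E s t * G s t - F s t ^ 2)).

Definition nabla (C : V3) (x y : TF) : TF := tan_coef (snm C x (tanf y)).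

Definition bracket (x y : TF) : TF :=
  mkTF (fun s t => tc1 x s t * ds (tc1 y) s t + tc2 x s t * dt (tc1 y) s t
                   - (tc1 y s t * ds (tc1 x) s t + tc2 y s t * dt (tc1 x) s t))
       (fun s t => tc1 x s t * ds (tc2 y) s t + tc2 x s t * dt (tc2 y) s t
                   - (tc1 y s t * ds (tc2 x) s t + tc2 y s t * dt (tc2 x) s t)).

Definition curv (C : V3) (x y z : TF) : TF :=
  tfsub (tfsub (nabla C x (nabla C y z)) (nabla C y (nabla C x z)))
        (nabla C (bracket x y) z).

Definition sect_expr (C : V3) (e1 e2 : TF) (s t : R) : R :=
  / 2 * (vdot (tanf (curv C e1 e2 e2) s t) (tanf e1 s t)
         + vdot (tanf (curv C e2 e1 e1) s t) (tanf e2 s t)).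

End Surface.

Definition dom (lo hi : Rbar) (s t : R) : Prop := Rbar_lt lo s /\ Rbar_lt s hi.

From Stdlib Require Import Reals List Lra.
From Coquelicot Require Import Coquelicot.
Open Scope R_scope.

(* On psi(s,t) = g(s) + t w the coordinate frame is (T, w) with T = g', <T,w> = 0 and
   C = eps w, eps = +-1.  Taking tangential parts, the induced snm-connection keeps only
   two lower-order terms: the Christoffel symbol h = <T',T>/|T|^2 of the profile curve
   and the snm term eps.  A direct computation then gives
   R(X,Y)Z = eps^2 (x1 y2 - x2 y1) z2 psi_s, so for an orthonormal frame (e1, e2) the
   sectional expression is |T|^2 det(e1,e2)^2 / 2, and |T|^2 det(e1,e2)^2 = 1 is the
   Gram determinant of the orthonormal frame (Lagrange's identity). *)

Lemma V3_ext (u v : V3) : vx u = vx v -> vy u = vy v -> vz u = vz v -> u = v.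
Proof. destruct u, v; simpl; intros; subst; reflexivity. Qed.

Lemma vdot_comm u v : vdot u v = vdot v u.
Proof. unfold vdot; ring. Qed.
Lemma vdot_addl u v z : vdot (vadd u v) z = vdot u z + vdot v z.
Proof. unfold vdot, vadd; simpl; ring. Qed.
Lemma vdot_addr u v z : vdot z (vadd u v) = vdot z u + vdot z v.
Proof. unfold vdot, vadd; simpl; ring. Qed.
Lemma vdot_scall k u z : vdot (vscal k u) z = k * vdot u z.
Proof. unfold vdot, vscal; simpl; ring. Qed.
Lemma vdot_scalr k u z : vdot z (vscal k u) = k * vdot z u.
Proof. unfold vdot, vscal; simpl; ring. Qed.
Lemma vdot_oppr u v : vdot u (vopp v) = - vdot u v.
Proof. unfold vdot, vopp, vscal; simpl; ring. Qed.

Lemma vdot_self_eq0 u : vdot u u = 0 -> u = vzero.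
Proof.
  unfold vdot; intros Hu.
  apply V3_ext; simpl; nra.
Qed.

Lemma gram_lincomb p q a1 a2 b1 b2 :
  let u := vadd (vscal a1 p) (vscal a2 q) in
  let v := vadd (vscal b1 p) (vscal b2 q) in
  vdot u u * vdot v v - vdot u v ^ 2
  = (a1 * b2 - a2 * b1) ^ 2 * (vdot p p * vdot q q - vdot p q ^ 2).
Proof. unfold vdot, vadd, vscal; simpl; ring. Qed.

Definition in_interval (lo hi : Rbar) (a : R) : Prop := Rbar_lt lo a /\ Rbar_lt a hi.

Lemma locally_in_interval lo hi a : in_interval lo hi a -> locally a (in_interval lo hi).
Proof.
  intros [Hlo Hhi]. apply filter_and.
  - exact (open_Rbar_gt lo a Hlo).
  - exact (open_Rbar_lt hi a Hhi).
Qed.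

Section Smooth2.
Variables (U : R -> R -> Prop) (f : R -> R -> R).
Hypothesis f_smooth : smooth2 U f.

Lemma dpart_snoc l b :
  dpart (l ++ b :: nil) f = dpart l (if b then ds f else dt f).
Proof. induction l as [|b' l IH]; simpl; [reflexivity | now rewrite IH]. Qed.

Lemma smooth2_ds : smooth2 U (ds f).
Proof. intros l s t Hst. rewrite <- (dpart_snoc l true). exact (f_smooth _ s t Hst). Qed.

Lemma smooth2_dt : smooth2 U (dt f).
Proof. intros l s t Hst. rewrite <- (dpart_snoc l false). exact (f_smooth _ s t Hst). Qed.

Lemma smooth2_ex_derive_s s t : U s t -> ex_derive (fun a => f a t) s.
Proof. intros Hst. exact (proj1 (f_smooth nil s t Hst)). Qed.

Lemma smooth2_ex_derive_t s t : U s t -> ex_derive (fun b => f s b) t.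
Proof. intros Hst. exact (proj1 (proj2 (f_smooth nil s t Hst))). Qed.

End Smooth2.

Lemma smooth2_schwarz lo hi f s t :
  smooth2 (dom lo hi) f -> in_interval lo hi s -> ds (dt f) s t = dt (ds f) s t.
Proof.
  intros Hf Hs. apply Schwarz.
  - destruct (locally_in_interval lo hi s Hs) as [e He].
    exists e. intros u v Hu _. assert (Hu' : dom lo hi u v) by (apply He; exact Hu).
    repeat split.
    + exact (smooth2_ex_derive_s _ _ Hf u v Hu').
    + exact (smooth2_ex_derive_t _ _ Hf u v Hu').
    + exact (smooth2_ex_derive_s _ _ (smooth2_dt _ _ Hf) u v Hu').
    + exact (smooth2_ex_derive_t _ _ (smooth2_ds _ _ Hf) u v Hu').
  - apply continuity_2d_pt_filterlim. exact (proj2 (proj2 (Hf (true :: false :: nil) s t Hs))).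
  - apply continuity_2d_pt_filterlim. exact (proj2 (proj2 (Hf (false :: true :: nil) s t Hs))).
Qed.

Definition smooth_field (lo hi : Rbar) (x : TF) : Prop :=
  smooth2 (dom lo hi) (tc1 x) /\ smooth2 (dom lo hi) (tc2 x).

Definition derivable_at (x : TF) (s t : R) : Prop :=
  ex_derive (fun a => tc1 x a t) s /\ ex_derive (fun a => tc2 x a t) s /\
  ex_derive (fun b => tc1 x s b) t /\ ex_derive (fun b => tc2 x s b) t.

Definition agree_on (lo hi : Rbar) (x y : TF) : Prop :=
  forall a b, in_interval lo hi a -> tc1 x a b = tc1 y a b /\ tc2 x a b = tc2 y a b.

Lemma derivable_at_agree lo hi x y s t :
  agree_on lo hi x y -> in_interval lo hi s -> derivable_at y s t -> derivable_at x s t.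
Proof.
  intros Hxy Hs (H1 & H2 & H3 & H4).
  assert (Hloc : locally s (fun a => tc1 y a t = tc1 x a t /\ tc2 y a t = tc2 x a t)).
  { apply filter_imp with (2 := locally_in_interval lo hi s Hs). intros a Ha.
    destruct (Hxy a t Ha) as [E1 E2]. split; symmetry; assumption. }
  repeat split.
  - exact (ex_derive_ext_loc _ _ _ (filter_imp _ _ (fun a H => proj1 H) Hloc) H1).
  - exact (ex_derive_ext_loc _ _ _ (filter_imp _ _ (fun a H => proj2 H) Hloc) H2).
  - exact (ex_derive_ext _ _ _ (fun b => eq_sym (proj1 (Hxy s b Hs))) H3).
  - exact (ex_derive_ext _ _ _ (fun b => eq_sym (proj2 (Hxy s b Hs))) H4).
Qed.

(* [apply] would unfold [smooth2] and stall; [refine] matches it as stated. *)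
Ltac smooth2_closure :=
  repeat first [ refine (smooth2_ds _ _ _) | refine (smooth2_dt _ _ _) ]; assumption.

Ltac smooth_derivable :=
  match goal with
  | Hs : in_interval ?lo ?hi ?s |- ex_derive (fun a => ?f a ?t) ?s =>
      apply (smooth2_ex_derive_s (dom lo hi) f); [ smooth2_closure | exact Hs ]
  | Hs : in_interval ?lo ?hi ?s |- ex_derive (fun b => ?f ?s b) ?t =>
      apply (smooth2_ex_derive_t (dom lo hi) f); [ smooth2_closure | exact Hs ]
  end.

Lemma smooth_derivable_at lo hi x s t :
  smooth_field lo hi x -> in_interval lo hi s -> derivable_at x s t.
Proof. intros [Hx1 Hx2] Hs. repeat split; smooth_derivable. Qed.

Section CoordinateConnection.
Variables (lo hi : Rbar) (h : R -> R) (eps : R).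
Hypothesis h_derivable : forall a, in_interval lo hi a -> ex_derive h a.

(* Coordinates, in the frame (psi_s, psi_t), of the induced connection of a cylinder:
   [h] is the Christoffel symbol <T',T>/|T|^2 and [eps] = <C,w>. *)
Definition conn1 (x y : TF) (a b : R) : R :=
  tc1 x a b * ds (tc1 y) a b + tc2 x a b * dt (tc1 y) a b
  + (tc1 y a b * h a + eps * tc2 y a b) * tc1 x a b.
Definition conn2 (x y : TF) (a b : R) : R :=
  tc1 x a b * ds (tc2 y) a b + tc2 x a b * dt (tc2 y) a b + eps * tc2 y a b * tc2 x a b.
Definition conn (x y : TF) : TF := mkTF (conn1 x y) (conn2 x y).

Ltac derivable :=
  first [ apply h_derivable; assumption | smooth_derivable ].

Section ConnectionDerivatives.
Variables (x y : TF) (s t : R).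
Hypotheses (Hx : smooth_field lo hi x) (Hy : smooth_field lo hi y) (Hs : in_interval lo hi s).

Let x1 := tc1 x. Let x2 := tc2 x. Let y1 := tc1 y. Let y2 := tc2 y.

Lemma conn_derivable : derivable_at (conn x y) s t.
Proof.
  destruct Hx as [Hx1 Hx2], Hy as [Hy1 Hy2].
  repeat split; cbn [conn tc1 tc2]; unfold conn1, conn2; auto_derive; repeat split; derivable.
Qed.

Lemma ds_conn1 : ds (conn1 x y) s t =
  ds x1 s t * ds y1 s t + x1 s t * ds (ds y1) s t
  + (ds x2 s t * dt y1 s t + x2 s t * ds (dt y1) s t)
  + ((ds y1 s t * h s + y1 s t * Derive (fun a => h a) s + eps * ds y2 s t) * x1 s t
     + (y1 s t * h s + eps * y2 s t) * ds x1 s t).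
Proof.
  destruct Hx as [Hx1 Hx2], Hy as [Hy1 Hy2].
  unfold ds at 1, conn1. apply is_derive_unique. auto_derive.
  - repeat split; derivable.
  - subst x1 x2 y1 y2. unfold ds. ring.
Qed.

Lemma dt_conn1 : dt (conn1 x y) s t =
  dt x1 s t * ds y1 s t + x1 s t * dt (ds y1) s t
  + (dt x2 s t * dt y1 s t + x2 s t * dt (dt y1) s t)
  + ((dt y1 s t * h s + eps * dt y2 s t) * x1 s t
     + (y1 s t * h s + eps * y2 s t) * dt x1 s t).
Proof.
  destruct Hx as [Hx1 Hx2], Hy as [Hy1 Hy2].
  unfold dt at 1, conn1. apply is_derive_unique. auto_derive.
  - repeat split; derivable.
  - subst x1 x2 y1 y2. unfold dt. ring.
Qed.

Lemma ds_conn2 : ds (conn2 x y) s t =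
  ds x1 s t * ds y2 s t + x1 s t * ds (ds y2) s t
  + (ds x2 s t * dt y2 s t + x2 s t * ds (dt y2) s t)
  + eps * (ds y2 s t * x2 s t + y2 s t * ds x2 s t).
Proof.
  destruct Hx as [Hx1 Hx2], Hy as [Hy1 Hy2].
  unfold ds at 1, conn2. apply is_derive_unique. auto_derive.
  - repeat split; derivable.
  - subst x1 x2 y1 y2. unfold ds. ring.
Qed.

Lemma dt_conn2 : dt (conn2 x y) s t =
  dt x1 s t * ds y2 s t + x1 s t * dt (ds y2) s t
  + (dt x2 s t * dt y2 s t + x2 s t * dt (dt y2) s t)
  + eps * (dt y2 s t * x2 s t + y2 s t * dt x2 s t).
Proof.
  destruct Hx as [Hx1 Hx2], Hy as [Hy1 Hy2].
  unfold dt at 1, conn2. apply is_derive_unique. auto_derive.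
  - repeat split; derivable.
  - subst x1 x2 y1 y2. unfold dt. ring.
Qed.

End ConnectionDerivatives.

Lemma conn_agree x y y' s t : agree_on lo hi y y' -> in_interval lo hi s ->
  conn1 x y s t = conn1 x y' s t /\ conn2 x y s t = conn2 x y' s t.
Proof.
  intros Hyy Hs.
  assert (Hloc : forall (c : TF -> R -> R -> R),
    (forall a b, in_interval lo hi a -> c y a b = c y' a b) ->
    ds (c y) s t = ds (c y') s t /\ dt (c y) s t = dt (c y') s t).
  { intros c Hc. split.
    - apply Derive_ext_loc.
      apply filter_imp with (2 := locally_in_interval lo hi s Hs). intros a Ha. exact (Hc a t Ha).
    - apply Derive_ext. intros b. exact (Hc s b Hs). }
  destruct (Hloc tc1 (fun a b Ha => proj1 (Hyy a b Ha))) as [E1 F1].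
  destruct (Hloc tc2 (fun a b Ha => proj2 (Hyy a b Ha))) as [E2 F2].
  destruct (Hyy s t Hs) as [G1 G2].
  unfold conn1, conn2. rewrite E1, F1, E2, F2, G1, G2. split; reflexivity.
Qed.

Lemma conn_curvature x y z s t :
  smooth_field lo hi x -> smooth_field lo hi y -> smooth_field lo hi z -> in_interval lo hi s ->
  conn1 x (conn y z) s t - conn1 y (conn x z) s t - conn1 (bracket x y) z s t
    = eps ^ 2 * (tc1 x s t * tc2 y s t - tc2 x s t * tc1 y s t) * tc2 z s t /\
  conn2 x (conn y z) s t - conn2 y (conn x z) s t - conn2 (bracket x y) z s t = 0.
Proof.
  intros Hx Hy Hz Hs.
  unfold conn1, conn2. cbn [conn bracket tc1 tc2].
  rewrite ds_conn1, dt_conn1, ds_conn2, dt_conn2,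
    (ds_conn1 x), (dt_conn1 x), (ds_conn2 x), (dt_conn2 x) by assumption.
  destruct Hz as [Hz1 Hz2].
  unfold conn1, conn2.
  rewrite !(smooth2_schwarz lo hi (tc1 z)), !(smooth2_schwarz lo hi (tc2 z)) by assumption.
  split; ring.
Qed.

End CoordinateConnection.

Definition vex_derive (f : R -> V3) (a : R) : Prop :=
  ex_derive (fun b => vx (f b)) a /\ ex_derive (fun b => vy (f b)) a /\
  ex_derive (fun b => vz (f b)) a.

(* [auto_derive] cannot see through the projections [vx (f b)], hence the components are
   abstracted before it is called. *)
Lemma is_derive_vdot_const (f : R -> V3) (w : V3) (a : R) :
  vex_derive f a -> is_derive (fun b => vdot (f b) w) a (vdot (vderiv f a) w).
Proof.
  unfold vex_derive, vdot, vderiv; cbn [vx vy vz].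
  set (u1 := fun b => vx (f b)); set (u2 := fun b => vy (f b)); set (u3 := fun b => vz (f b)).
  change (ex_derive u1 a /\ ex_derive u2 a /\ ex_derive u3 a ->
    is_derive (fun b => u1 b * vx w + u2 b * vy w + u3 b * vz w) a
      (Derive (fun b => u1 b) a * vx w + Derive (fun b => u2 b) a * vy w
       + Derive (fun b => u3 b) a * vz w)).
  clearbody u1 u2 u3. intros (D1 & D2 & D3).
  auto_derive; [repeat split; assumption | ring].
Qed.

Lemma ex_derive_vdot (f1 f2 : R -> V3) (a : R) :
  vex_derive f1 a -> vex_derive f2 a -> ex_derive (fun b => vdot (f1 b) (f2 b)) a.
Proof.
  unfold vex_derive, vdot.
  set (u1 := fun b => vx (f1 b)); set (u2 := fun b => vy (f1 b)); set (u3 := fun b => vz (f1 b)).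
  set (v1 := fun b => vx (f2 b)); set (v2 := fun b => vy (f2 b)); set (v3 := fun b => vz (f2 b)).
  change (ex_derive u1 a /\ ex_derive u2 a /\ ex_derive u3 a ->
    ex_derive v1 a /\ ex_derive v2 a /\ ex_derive v3 a ->
    ex_derive (fun b => u1 b * v1 b + u2 b * v2 b + u3 b * v3 b) a).
  clearbody u1 u2 u3 v1 v2 v3. intros (D1 & D2 & D3) (E1 & E2 & E3).
  auto_derive. repeat split; assumption.
Qed.

Lemma vderiv_orth (f : R -> V3) (w : V3) (c a : R) :
  vex_derive f a -> locally a (fun b => vdot (f b) w = c) -> vdot (vderiv f a) w = 0.
Proof.
  intros Hf Hc.
  transitivity (Derive (fun b => vdot (f b) w) a).
  - symmetry. exact (is_derive_unique _ _ _ (is_derive_vdot_const f w a Hf)).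
  - rewrite <- (Derive_const c a). exact (Derive_ext_loc _ _ _ Hc).
Qed.

Lemma Derive_coef_comb (c1 c2 p : R -> R) (k s : R) :
  ex_derive c1 s -> ex_derive c2 s -> ex_derive p s ->
  Derive (fun a => c1 a * p a + c2 a * k) s
  = Derive (fun a => c1 a) s * p s + c1 s * Derive (fun a => p a) s + Derive (fun a => c2 a) s * k.
Proof. intros. apply is_derive_unique. auto_derive; [repeat split; assumption | ring]. Qed.

Section Cylinder.
Variables (C : V3) (lo hi : Rbar) (g : R -> V3) (w : V3).
Hypothesis HC : vdot C C = 1.
Hypothesis Hw : w = C \/ w = vopp C.
Hypothesis Hg_smooth : forall (n : nat) (s : R), Rbar_lt lo s -> Rbar_lt s hi ->
  ex_derive_n (fun a => vx (g a)) n s /\ ex_derive_n (fun a => vy (g a)) n s /\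
  ex_derive_n (fun a => vz (g a)) n s.
Hypothesis Hg_reg : forall s : R, Rbar_lt lo s -> Rbar_lt s hi -> vderiv g s <> vzero.
Hypothesis Hg_plane : exists c : R, forall s : R, Rbar_lt lo s -> Rbar_lt s hi ->
  vdot (g s) w = c.

Let psi := cyl g w.
Let T := vderiv g.
Let T' := vderiv T.
Let speed2 (a : R) := vdot (T a) (T a).
Let h (a : R) := vdot (T' a) (T a) / speed2 a.
Let eps := vdot C w.

Lemma C_eq_eps_w : C = vscal eps w.
Proof.
  unfold eps. destruct Hw as [-> | ->]; [rewrite HC | rewrite vdot_oppr, HC];
    apply V3_ext; cbn; ring.
Qed.

Lemma w_unit : vdot w w = 1.
Proof.
  destruct Hw as [-> | ->]; [exact HC |].
  unfold vopp. rewrite vdot_scall, vdot_scalr, HC. ring.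
Qed.

Lemma eps_sq : eps ^ 2 = 1.
Proof. unfold eps. destruct Hw as [-> | ->]; [rewrite HC | rewrite vdot_oppr, HC]; ring. Qed.

Section AtParameter.
Variable a : R.
Hypothesis Ha : in_interval lo hi a.

Lemma g_derivable : vex_derive g a.
Proof. exact (Hg_smooth 1 a (proj1 Ha) (proj2 Ha)). Qed.

Lemma T_derivable : vex_derive T a.
Proof. exact (Hg_smooth 2 a (proj1 Ha) (proj2 Ha)). Qed.

Lemma T'_derivable : vex_derive T' a.
Proof. exact (Hg_smooth 3 a (proj1 Ha) (proj2 Ha)). Qed.

Lemma speed2_neq0 : speed2 a <> 0.
Proof. intros H0. exact (Hg_reg a (proj1 Ha) (proj2 Ha) (vdot_self_eq0 _ H0)). Qed.

Lemma h_derivable : ex_derive h a.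
Proof.
  apply ex_derive_div; [| | exact speed2_neq0]; apply ex_derive_vdot;
    first [exact T_derivable | exact T'_derivable].
Qed.

Lemma T_orth_w : vdot (T a) w = 0.
Proof.
  destruct Hg_plane as [c Hc].
  apply (vderiv_orth g w c a g_derivable).
  apply filter_imp with (2 := locally_in_interval lo hi a Ha).
  intros b [Hb1 Hb2]. exact (Hc b Hb1 Hb2).
Qed.

Lemma psi_s_cyl b : psi_s psi a b = T a.
Proof.
  destruct g_derivable as (D1 & D2 & D3).
  unfold psi_s, dsV, ds, psi, cyl. apply V3_ext; cbn [vadd vscal vx vy vz];
    (rewrite Derive_plus;
       [rewrite Derive_const; apply Rplus_0_r | assumption | apply ex_derive_const]).
Qed.

End AtParameter.

Lemma T'_orth_w a : in_interval lo hi a -> vdot (T' a) w = 0.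
Proof.
  intros Ha. apply (vderiv_orth T w 0 a (T_derivable a Ha)).
  apply filter_imp with (2 := locally_in_interval lo hi a Ha). exact T_orth_w.
Qed.

Lemma psi_t_cyl a b : psi_t psi a b = w.
Proof.
  unfold psi_t, dtV, dt, psi, cyl. apply V3_ext; cbn [vadd vscal vx vy vz];
    (apply is_derive_unique; auto_derive; [exact I | ring]).
Qed.

Lemma w_orth_T a : in_interval lo hi a -> vdot w (T a) = 0.
Proof. intros Ha. rewrite vdot_comm. exact (T_orth_w a Ha). Qed.

Lemma C_orth_T a : in_interval lo hi a -> vdot C (T a) = 0.
Proof. intros Ha. rewrite C_eq_eps_w, vdot_scall, w_orth_T by exact Ha. ring. Qed.

Lemma T'_dot_T a : in_interval lo hi a -> vdot (T' a) (T a) = h a * speed2 a.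
Proof. intros Ha. unfold h. field. exact (speed2_neq0 a Ha). Qed.

Lemma tanf_cyl_component (proj : V3 -> R)
  (proj_add : forall u v, proj (vadd u v) = proj u + proj v)
  (proj_scal : forall k u, proj (vscal k u) = k * proj u) y a b :
  in_interval lo hi a -> proj (tanf psi y a b) = tc1 y a b * proj (T a) + tc2 y a b * proj w.
Proof.
  intros Ha. unfold tanf. rewrite psi_s_cyl, psi_t_cyl, proj_add, !proj_scal by exact Ha.
  reflexivity.
Qed.

Lemma dsV_tanf_cyl y s t : in_interval lo hi s -> derivable_at y s t ->
  dsV (tanf psi y) s t = vadd (vadd (vscal (ds (tc1 y) s t) (T s)) (vscal (tc1 y s t) (T' s)))
                              (vscal (ds (tc2 y) s t) w).
Proof.
  intros Hs (Hy1 & Hy2 & _).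
  assert (Hcomp : forall proj : V3 -> R,
    (forall u v, proj (vadd u v) = proj u + proj v) ->
    (forall k u, proj (vscal k u) = k * proj u) ->
    ex_derive (fun a => proj (T a)) s ->
    Derive (fun a => proj (tanf psi y a t)) s
    = ds (tc1 y) s t * proj (T s) + tc1 y s t * Derive (fun a => proj (T a)) s
      + ds (tc2 y) s t * proj w).
  { intros proj Hadd Hscal HT.
    rewrite (Derive_ext_loc _ (fun a => tc1 y a t * proj (T a) + tc2 y a t * proj w)).
    - exact (Derive_coef_comb (fun a => tc1 y a t) (fun a => tc2 y a t) (fun a => proj (T a))
               (proj w) s Hy1 Hy2 HT).
    - apply filter_imp with (2 := locally_in_interval lo hi s Hs). intros a Ha.
      exact (tanf_cyl_component proj Hadd Hscal y a t Ha). }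
  destruct (T_derivable s Hs) as (D1 & D2 & D3).
  apply V3_ext; cbn [dsV vx vy vz vadd vscal]; unfold ds at 1; apply Hcomp;
    first [reflexivity | assumption].
Qed.

Lemma dtV_tanf_cyl y s t : in_interval lo hi s -> derivable_at y s t ->
  dtV (tanf psi y) s t = vadd (vscal (dt (tc1 y) s t) (T s)) (vscal (dt (tc2 y) s t) w).
Proof.
  intros Hs (_ & _ & Hy1 & Hy2).
  assert (Hcomp : forall proj : V3 -> R,
    (forall u v, proj (vadd u v) = proj u + proj v) ->
    (forall k u, proj (vscal k u) = k * proj u) ->
    Derive (fun b => proj (tanf psi y s b)) t
    = dt (tc1 y) s t * proj (T s) + dt (tc2 y) s t * proj w).
  { intros proj Hadd Hscal.
    rewrite (Derive_ext _ (fun b => tc1 y s b * proj (T s) + tc2 y s b * proj w)).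
    - apply is_derive_unique. auto_derive; [repeat split; assumption | unfold dt; ring].
    - intros b. exact (tanf_cyl_component proj Hadd Hscal y s b Hs). }
  apply V3_ext; cbn [dtV vx vy vz vadd vscal]; unfold dt at 1; apply Hcomp; reflexivity.
Qed.

Lemma nabla_cyl x y s t : in_interval lo hi s -> derivable_at y s t ->
  tc1 (nabla psi C x y) s t = conn1 h eps x y s t /\
  tc2 (nabla psi C x y) s t = conn2 eps x y s t.
Proof.
  intros Hs Hy.
  unfold nabla, tan_coef, snm, Dflat; cbn [tc1 tc2].
  rewrite dsV_tanf_cyl, dtV_tanf_cyl by assumption. unfold tanf.
  rewrite !(psi_s_cyl s Hs), !psi_t_cyl.
  repeat rewrite ?vdot_addl, ?vdot_addr, ?vdot_scall, ?vdot_scalr.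
  rewrite (T_orth_w s Hs), (w_orth_T s Hs), (T'_orth_w s Hs), (C_orth_T s Hs), (T'_dot_T s Hs),
    w_unit.
  fold (speed2 s) eps. pose proof (speed2_neq0 s Hs).
  unfold conn1, conn2. split; field; assumption.
Qed.

Lemma nabla_cyl_agree y z :
  smooth_field lo hi z -> agree_on lo hi (nabla psi C y z) (conn h eps y z).
Proof. intros Hz a b Ha. exact (nabla_cyl y z a b Ha (smooth_derivable_at lo hi z a b Hz Ha)). Qed.

Lemma nabla_nabla_cyl x y z s t :
  smooth_field lo hi y -> smooth_field lo hi z -> in_interval lo hi s ->
  tc1 (nabla psi C x (nabla psi C y z)) s t = conn1 h eps x (conn h eps y z) s t /\
  tc2 (nabla psi C x (nabla psi C y z)) s t = conn2 eps x (conn h eps y z) s t.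
Proof.
  intros Hy Hz Hs.
  assert (Hagree := nabla_cyl_agree y z Hz).
  assert (Hder : derivable_at (nabla psi C y z) s t).
  { apply (derivable_at_agree lo hi _ _ s t Hagree Hs).
    exact (conn_derivable lo hi h eps h_derivable y z s t Hy Hz Hs). }
  destruct (nabla_cyl x _ s t Hs Hder) as [E1 E2]. rewrite E1, E2.
  exact (conn_agree lo hi h eps x _ _ s t Hagree Hs).
Qed.

Lemma curv_cyl x y z s t :
  smooth_field lo hi x -> smooth_field lo hi y -> smooth_field lo hi z -> in_interval lo hi s ->
  tc1 (curv psi C x y z) s t
    = eps ^ 2 * (tc1 x s t * tc2 y s t - tc2 x s t * tc1 y s t) * tc2 z s t /\
  tc2 (curv psi C x y z) s t = 0.
Proof.
  intros Hx Hy Hz Hs.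
  destruct (nabla_nabla_cyl x y z s t Hy Hz Hs) as [A1 A2].
  destruct (nabla_nabla_cyl y x z s t Hx Hz Hs) as [B1 B2].
  destruct (nabla_cyl (bracket x y) z s t Hs (smooth_derivable_at lo hi z s t Hz Hs)) as [C1 C2].
  unfold curv; cbn [tfsub tc1 tc2]. rewrite A1, A2, B1, B2, C1, C2.
  exact (conn_curvature lo hi h eps h_derivable x y z s t Hx Hy Hz Hs).
Qed.

Lemma sect_expr_cyl e1 e2 s t :
  smooth_field lo hi e1 -> smooth_field lo hi e2 -> in_interval lo hi s ->
  vdot (tanf psi e1 s t) (tanf psi e1 s t) = 1 ->
  vdot (tanf psi e2 s t) (tanf psi e2 s t) = 1 ->
  vdot (tanf psi e1 s t) (tanf psi e2 s t) = 0 ->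
  sect_expr psi C e1 e2 s t = / 2.
Proof.
  intros He1 He2 Hs H11 H22 H12.
  destruct (curv_cyl e1 e2 e2 s t He1 He2 He2 Hs) as [K1 K2].
  destruct (curv_cyl e2 e1 e1 s t He2 He1 He1 Hs) as [L1 L2].
  pose proof (gram_lincomb (T s) w (tc1 e1 s t) (tc2 e1 s t) (tc1 e2 s t) (tc2 e2 s t)) as Hgram.
  unfold sect_expr, tanf in *. rewrite !(psi_s_cyl s Hs), !psi_t_cyl in *.
  cbv zeta in Hgram. fold (speed2 s) in Hgram.
  rewrite H11, H22, H12, (T_orth_w s Hs), w_unit in Hgram.
  rewrite K1, K2, L1, L2.
  repeat rewrite ?vdot_addl, ?vdot_addr, ?vdot_scall, ?vdot_scalr.
  rewrite (T_orth_w s Hs), (w_orth_T s Hs), w_unit. fold (speed2 s).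
  set (det := tc1 e1 s t * tc2 e2 s t - tc2 e1 s t * tc1 e2 s t) in *.
  assert (Hunit : det ^ 2 * speed2 s = 1) by nra.
  transitivity (/ 2 * eps ^ 2 * (det ^ 2 * speed2 s)); [unfold det; ring |].
  rewrite eps_sq, Hunit. ring.
Qed.

End Cylinder.

Theorem corollary3p2
  (C : V3) (HC : vdot C C = 1)
  (lo hi : Rbar) (Hlohi : Rbar_lt lo hi)
  (g : R -> V3) (w : V3) (Hw : w = C \/ w = vopp C)
  (Hg_smooth : forall (n : nat) (s : R), Rbar_lt lo s -> Rbar_lt s hi ->
      ex_derive_n (fun a => vx (g a)) n s /\
      ex_derive_n (fun a => vy (g a)) n s /\
      ex_derive_n (fun a => vz (g a)) n s)
  (Hg_reg : forall s : R, Rbar_lt lo s -> Rbar_lt s hi -> vderiv g s <> vzero)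
  (Hg_plane : exists c : R, forall s : R, Rbar_lt lo s -> Rbar_lt s hi ->
      vdot (g s) w = c) :
  forall e1 e2 : TF,
    smooth2 (dom lo hi) (tc1 e1) -> smooth2 (dom lo hi) (tc2 e1) ->
    smooth2 (dom lo hi) (tc1 e2) -> smooth2 (dom lo hi) (tc2 e2) ->
    forall s t : R, dom lo hi s t ->
      vdot (tanf (cyl g w) e1 s t) (tanf (cyl g w) e1 s t) = 1 ->
      vdot (tanf (cyl g w) e2 s t) (tanf (cyl g w) e2 s t) = 1 ->
      vdot (tanf (cyl g w) e1 s t) (tanf (cyl g w) e2 s t) = 0 ->
      sect_expr (cyl g w) C e1 e2 s t = / 2.
Proof.
  intros e1 e2 S11 S12 S21 S22 s t Hs.
  exact (sect_expr_cyl C lo hi g w HC Hw Hg_smooth Hg_reg Hg_plane e1 e2 s t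
           (conj S11 S12) (conj S21 S22) Hs).
Qed.
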